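(* Let $(R,\mathfrak m)$ be a one-dimensional Cohen–Macaulay local ring. Let $I,J$ be regular trace ideals of $R$ with $J\subseteq I$ and $\ell_R(I/J)=2$. Assume that $I:I$ is a local ring and there exists $q\in I\setminus J$ with $IJ=qJ$ and $I^2\ne qI$. Then $$\mathcal T(I:I)=\{q^{-1}Y\mid Y\in\mathcal T(R),\ Y\subseteq J\}\cup\{I:I\}.$$
   Context: $Q(R)$ is the total ring of fractions, $I:I=\{x\in Q(R)\mid xI\subseteq I\}$, $\ell_R$ denotes length. An ideal is regular if it contains a non-zerodivisor. For a ring $A$, the trace ideal of an $A$-module $M$ is $\sum_{f\in\mathrm{Hom}_A(M,A)}\mathrm{Im}f$, and $\mathcal T(A)$ is the set of regular trace ideals of $A$. *)

From HB Require Import structures.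
From mathcomp Require Import all_boot all_algebra.
From mathcomp Require Import boolp.
Set Implicit Arguments. Unset Strict Implicit. Unset Printing Implicit Defensive.
Import GRing.Theory.
Local Open Scope ring_scope.

Definition nzd (A : comNzRingType) (x : A) : Prop :=
  forall y : A, x * y = 0 -> y = 0.

Definition subP (A : Type) (X Y : A -> Prop) : Prop := forall x, X x -> Y x.
Definition ssubP (A : Type) (X Y : A -> Prop) : Prop :=
  subP X Y /\ exists y, Y y /\ ~ X y.
Definition eqP_ (A : Type) (X Y : A -> Prop) : Prop := forall x, X x <-> Y x.

Definition is_ideal (A : comNzRingType) (X : A -> Prop) : Prop :=
  [/\ X 0, (forall x y, X x -> X y -> X (x + y)) & (forall a x, X x -> X (a * x))].

Definition prime_ideal (A : comNzRingType) (P : A -> Prop) : Prop :=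
  [/\ is_ideal P, ~ P 1 & forall a b, P (a * b) -> P a \/ P b].

Definition maximal_ideal (A : comNzRingType) (P : A -> Prop) : Prop :=
  [/\ is_ideal P, ~ P 1 &
      forall X, is_ideal X -> subP P X -> subP X P \/ X 1].

Definition local_with (A : comNzRingType) (m : A -> Prop) : Prop :=
  maximal_ideal m /\ forall m', maximal_ideal m' -> eqP_ m' m.

Definition local_ring (A : comNzRingType) : Prop := exists m : A -> Prop, local_with m.

Definition noetherian (A : comNzRingType) : Prop :=
  forall K : nat -> A -> Prop, (forall n, is_ideal (K n)) ->
    (forall n, subP (K n) (K n.+1)) ->
    exists N, forall n, (N <= n)%N -> subP (K n) (K N).

Definition prime_chain (A : comNzRingType) (n : nat) : Prop :=
  exists P : nat -> A -> Prop,
    (forall i, (i <= n)%N -> prime_ideal (P i)) /\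
    (forall i, (i < n)%N -> ssubP (P i) (P i.+1)).

Definition krull_dim (A : comNzRingType) (n : nat) : Prop :=
  prime_chain A n /\ ~ prime_chain A n.+1.

Definition gen_ideal (A : comNzRingType) (s : seq A) (x : A) : Prop :=
  exists c : nat -> A, x = \sum_(i < size s) c i * s`_i.

Definition regular_seq (A : comNzRingType) (s : seq A) : Prop :=
  (forall i, (i < size s)%N -> forall y,
      gen_ideal (take i s) (s`_i * y) -> gen_ideal (take i s) y) /\
  ~ gen_ideal s 1.

Definition cohen_macaulay (A : comNzRingType) (m : A -> Prop) : Prop :=
  exists n, krull_dim A n /\
    exists s : seq A, [/\ size s = n, (forall x, x \in s -> m x) & regular_seq s].

(* length of the R-module I/J (J <= I), via chains of intermediate ideals *)
Definition ideal_chain (A : comNzRingType) (J I : A -> Prop) (n : nat) : Prop :=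
  exists K : nat -> A -> Prop,
    [/\ forall i, (i <= n)%N -> is_ideal (K i), eqP_ (K 0%N) J, eqP_ (K n) I &
        forall i, (i < n)%N -> ssubP (K i) (K i.+1)].

Definition quot_length (A : comNzRingType) (J I : A -> Prop) (n : nat) : Prop :=
  ideal_chain J I n /\ ~ ideal_chain J I n.+1.

Definition prod_ideal (A : comNzRingType) (X Y : A -> Prop) (z : A) : Prop :=
  exists n (a b : 'I_n -> A), [/\ forall i, X (a i), forall i, Y (b i) &
                                   z = \sum_(i < n) a i * b i].

Definition trace_of (A : comNzRingType) (M : lmodType A) (a : A) : Prop :=
  exists n (f : 'I_n -> {linear M -> A^o}) (v : 'I_n -> M),
    a = \sum_(i < n) f i (v i).

Definition reg_trace (A : comNzRingType) (X : A -> Prop) : Prop :=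
  (exists M : lmodType A, eqP_ X (trace_of M)) /\ exists x, X x /\ nzd x.

Definition total_ring_of_fractions (R : comNzRingType) (Q : comUnitRingType)
  (iota : {rmorphism R -> Q}) : Prop :=
  [/\ injective iota,
      forall s, nzd s -> iota s \is a GRing.unit &
      forall z : Q, exists a s, nzd s /\ z = iota a / iota s].

Record ideal (R : comNzRingType) := Ideal {
  ideal_mem :> R -> Prop;
  ideal_is_ideal : is_ideal ideal_mem }.

Section Colon.
Variables (R : comNzRingType) (Q : comUnitRingType)
          (iota : {rmorphism R -> Q}) (I : ideal R).

Definition colonP (x : Q) : Prop :=
  forall i, I i -> exists j, I j /\ x * iota i = iota j.

Definition colonb : pred Q := fun x => `[< colonP x >].

Lemma colon_closed : subring_closed colonb.
Proof.
case: (ideal_is_ideal I) => I0 ID IM.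
split.
- apply/asboolP => i Ii; exists i; split => //; by rewrite mul1r.
- move=> x y /asboolP Hx /asboolP Hy; apply/asboolP => i Ii.
  have [j1 [Ij1 E1]] := Hx i Ii; have [j2 [Ij2 E2]] := Hy i Ii.
  exists (j1 - j2); split.
  + apply: ID => //; rewrite -mulN1r; exact: IM.
  + by rewrite mulrBl E1 E2 rmorphB.
- move=> x y /asboolP Hx /asboolP Hy; apply/asboolP => i Ii.
  have [j2 [Ij2 E2]] := Hy i Ii; have [j1 [Ij1 E1]] := Hx j2 Ij2.
  exists j1; split => //; by rewrite -mulrA E2 E1.
Qed.

Record colon_ring := ColonRing { colon_val :> Q; colon_valP : colon_val \in colonb }.
HB.instance Definition _ := [isSub for colon_val].
HB.instance Definition _ := [Choice of colon_ring by <:].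
HB.instance Definition _ :=
  GRing.SubChoice_isSubComNzRing.Build Q colonb colon_ring colon_closed.
End Colon.

From HB Require Import structures.
From mathcomp Require Import all_boot all_algebra.
From mathcomp Require Import boolp.
Import GRing.Theory.
Local Open Scope ring_scope.

Set Implicit Arguments.
Unset Strict Implicit.
Unset Printing Implicit Defensive.

(* For a regular ideal [Y] of a ring [A] with total ring of fractions [Q],
   [Y] is a trace ideal iff [A : Y = Y : Y] in [Q]: homomorphisms [Y -> A] are
   multiplications by fractions, and [Y] is the trace of itself.
   Let [S = I : I]. As [I J = q J], [q^-1 J] is a proper ideal of [S]; it is
   maximal, since a larger proper ideal [X] would give a chain
   [J < q X < q S < I] (the last inclusion is strict as [I^2 <> q I]), against
   [l(I / J) = 2]. As [S] is local and noetherian, every proper trace ideal of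
   [S] lies in [q^-1 J], and [Y |-> q^-1 Y] matches the trace ideals of [R]
   inside [J] with the proper trace ideals of [S], the colon condition being
   transported by [q]. *)

Section ColonStable.
Variables (A : comNzRingType) (Q : comUnitRingType) (e : A -> Q).

Definition mul_sub (al : Q) (Y P : A -> Prop) : Prop :=
  forall y, Y y -> exists a, P a /\ al * e y = e a.

(* The paper's [R : Y = Y : Y], computed in [Q]. *)
Definition colon_stable (Y : A -> Prop) : Prop :=
  forall al, mul_sub al Y (fun _ => True) -> mul_sub al Y Y.

End ColonStable.

Lemma ssubP_of (T : Type) (X Y : T -> Prop) : subP X Y -> ~ subP Y X -> ssubP X Y.
Proof.
move=> XY YX; split=> //; apply: contrapT => noY; apply: YX => y Yy.
by apply: contrapT => Xy; apply: noY; exists y.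
Qed.

Lemma nzd_of_unit (A : comNzRingType) (Q : comUnitRingType) (e : {rmorphism A -> Q})
    (a : A) : injective e -> e a \is a GRing.unit -> nzd a.
Proof.
move=> e_inj ea_unit y ay0; apply: e_inj; apply: (mulrI ea_unit).
by rewrite -rmorphM ay0 !rmorph0 mulr0.
Qed.

Lemma is_ideal_eqP (A : comNzRingType) (X Y : A -> Prop) :
  eqP_ X Y -> is_ideal Y -> is_ideal X.
Proof.
move=> XY [Y0 YD YM]; split.
- exact/XY.
- by move=> x y /XY Xx /XY Xy; apply/XY; apply: YD.
- by move=> a x /XY Xx; apply/XY; apply: YM.
Qed.

Section Trace.
Variables (A : comNzRingType) (M : lmodType A).

Lemma trace_of_mem (f : {linear M -> A^o}) v : trace_of M (f v).
Proof. by exists 1%N, (fun=> f), (fun=> v); rewrite big_ord1. Qed.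

Lemma trace_of_ideal : is_ideal (trace_of M).
Proof.
split.
- by exists 0%N, (fun=> \0), (fun=> 0); rewrite big_ord0.
- move=> _ _ [n1 [f1 [v1 ->]]] [n2 [f2 [v2 ->]]].
  pose pick T (g1 : 'I_n1 -> T) (g2 : 'I_n2 -> T) i :=
    match split i with inl k => g1 k | inr k => g2 k end.
  exists (n1 + n2)%N, (pick _ f1 f2), (pick _ v1 v2).
  by rewrite big_split_ord /pick; congr (_ + _); apply: eq_bigr => i _;
    [rewrite (unsplitK (inl i)) | rewrite (unsplitK (inr i))].
- move=> a _ [n [f [v ->]]]; exists n, f, (fun i => a *: v i).
  by rewrite mulr_sumr; apply: eq_bigr => i _; rewrite linearZ.
Qed.

End Trace.

Section ScaleLinear.
Variables (A : comNzRingType) (Q : comUnitRingType) (e : {rmorphism A -> Q}).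
Hypothesis e_inj : injective e.
Variables (M : lmodType A) (f : {linear M -> A^o}) (al : Q).
Hypothesis al_f : forall v, exists a, e a == al * e (f v).

Definition scale_fun v : A^o := xchoose (al_f v).

Lemma scale_funE v : e (scale_fun v) = al * e (f v).
Proof. exact/eqP/(xchooseP (al_f v)). Qed.

Lemma scale_fun_linear : linear scale_fun.
Proof.
move=> a u v; apply: e_inj.
rewrite rmorphD !scale_funE linearP [in RHS]rmorphM /= !rmorphD rmorphM /= !scale_funE.
by rewrite mulrDr mulrCA.
Qed.

HB.instance Definition _ :=
  GRing.isLinear.Build A M A^o *:%R scale_fun scale_fun_linear.

Definition scale_linear : {linear M -> A^o} := scale_fun.

End ScaleLinear.

Lemma trace_of_colon_stable (A : comNzRingType) (Q : comUnitRingType)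
    (e : {rmorphism A -> Q}) (M : lmodType A) (Y : A -> Prop) :
  injective e -> eqP_ Y (trace_of M) -> colon_stable e Y.
Proof.
move=> e_inj YM al alY _ /YM [n [f [v ->]]].
have al_f i w : exists a, e a == al * e (f i w).
  by have [a [_ ->]] := alY _ (proj2 (YM _) (trace_of_mem (f i) w)); exists a.
pose g i := scale_linear e_inj (al_f i).
exists (\sum_(i < n) g i (v i)); split; first by apply/YM; exists n, g, v.
by rewrite !rmorph_sum mulr_sumr; apply: eq_bigr => i _; rewrite scale_funE.
Qed.

Section IdealModule.
Variables (A : comNzRingType) (Y : ideal A).

Definition ideal_pred : pred A^o := fun x => `[< Y x >].

Lemma ideal_pred_closed : subsemimod_closed ideal_pred.
Proof.
have [Y0 YD YM] := ideal_is_ideal Y; split; first split.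
- exact/asboolP.
- by move=> x y /asboolP Yx /asboolP Yy; apply/asboolP; apply: YD.
- by move=> a x /asboolP Yx; apply/asboolP; apply: YM.
Qed.

Record ideal_module := IdealModule {
  ideal_module_val :> A^o;
  ideal_module_valP : ideal_module_val \in ideal_pred }.
HB.instance Definition _ := [isSub for ideal_module_val].
HB.instance Definition _ := [Choice of ideal_module by <:].
HB.instance Definition _ :=
  GRing.SubChoice_isSubLmodule.Build A A^o ideal_pred ideal_module ideal_pred_closed.

Definition ideal_incl (x : ideal_module) : A^o := val x.

Lemma ideal_incl_linear : linear ideal_incl.
Proof. by []. Qed.

HB.instance Definition _ :=
  GRing.isLinear.Build A ideal_module A^o *:%R ideal_incl ideal_incl_linear.

End IdealModule.

Section TraceIdealCharacterization.
Variables (A : comNzRingType) (Q : comUnitRingType) (e : {rmorphism A -> Q}).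
Hypothesis e_inj : injective e.

(* A regular ideal [Y] is the trace of itself: every [f : Y -> A] is
   multiplication by [f y0 / y0], which maps [Y] into [Y] by stability. *)
Lemma colon_stable_trace (Y : ideal A) y0 :
  Y y0 -> e y0 \is a GRing.unit -> colon_stable e Y ->
  eqP_ Y (trace_of (ideal_module Y)).
Proof.
move=> Yy0 y0_unit Ystab x; split.
  move=> Yx; have xP : (x : A^o) \in ideal_pred Y by apply/asboolP.
  exact: (trace_of_mem (@ideal_incl _ Y) (IdealModule xP)).
have [Y0 YD YM] := ideal_is_ideal Y.
move=> [n [f [v ->]]]; elim/big_ind: _ => // i _.
have y0P : (y0 : A^o) \in ideal_pred Y by apply/asboolP.
pose al := e (f i (IdealModule y0P)) / e y0.
have f_mul w : e (f i w) = al * e (val w).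
  have : y0 *: w = (val w : A) *: IdealModule y0P by apply: val_inj; exact: mulrC.
  move/(congr1 (fun z => e (f i z))); rewrite !linearZ /= !rmorphM /= => Ey0w.
  apply: (mulrI y0_unit); rewrite Ey0w /al.
  by rewrite [RHS]mulrCA mulrA divrK // mulrC.
have alY : mul_sub e al Y (fun _ => True).
  move=> y Yy; have yP : (y : A^o) \in ideal_pred Y by apply/asboolP.
  by exists (f i (IdealModule yP)); rewrite f_mul.
have Yvi : Y (val (v i)) by apply/asboolP; exact: ideal_module_valP.
have [y' [Yy' Ey']] := Ystab al alY _ Yvi.
by rewrite (e_inj (_ : e (f i (v i)) = e y')) // f_mul.
Qed.

Hypothesis nzd_unit : forall a, nzd a -> e a \is a GRing.unit.

Lemma reg_traceP (Y : A -> Prop) :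
  reg_trace Y <->
  [/\ is_ideal Y, exists y, Y y /\ e y \is a GRing.unit & colon_stable e Y].
Proof.
split.
- move=> [[M YM] [y [Yy nzd_y]]]; split.
  + exact: is_ideal_eqP YM (trace_of_ideal M).
  + by exists y; split; last exact: nzd_unit.
  + exact: trace_of_colon_stable e_inj YM.
- move=> [Yideal [y [Yy y_unit]] Ystab]; split.
    exists (ideal_module (Ideal Yideal)).
    exact: (colon_stable_trace (Y := Ideal Yideal) Yy y_unit Ystab).
  by exists y; split; last exact: nzd_of_unit y_unit.
Qed.

End TraceIdealCharacterization.

Lemma reg_trace_setT (A : comNzRingType) : reg_trace (fun _ : A => True).
Proof.
split; last by exists 1; split => // y; rewrite mul1r.
by exists A^o => a; split => // _; exact: (trace_of_mem (idfun : {linear A^o -> A^o})).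
Qed.

Section MaximalIdealExists.
Variables (A : comNzRingType) (K0 : A -> Prop).

Definition proper_over (K : A -> Prop) := [/\ is_ideal K, ~ K 1 & subP K0 K].

Hypothesis no_maximal : ~ exists M, maximal_ideal M /\ subP K0 M.

Lemma proper_over_grow K : proper_over K ->
  exists X, [/\ proper_over X, subP K X & ~ subP X K].
Proof.
move=> [Kideal K1 K0K]; apply: contrapT => no_bigger; apply: no_maximal.
exists K; split=> //; split=> // X Xideal KX.
case: (pselect (X 1)) => [|X1]; [by right | left].
apply: contrapT => XK; apply: no_bigger; exists X; split=> //.
by split=> // x /K0K /KX.
Qed.

Definition grow (K : {K | proper_over K}) : {K | proper_over K} :=
  let: exist X (And3 PX _ _) := cid (proper_over_grow (proj2_sig K)) in exist _ X PX.

Lemma growP K : subP (sval K) (sval (grow K)) /\ ~ subP (sval (grow K)) (sval K).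
Proof. by rewrite /grow; case: cid => X []. Qed.

End MaximalIdealExists.

Lemma noetherian_maximal_ideal (A : comNzRingType) (K : A -> Prop) :
  noetherian A -> is_ideal K -> ~ K 1 -> exists M, maximal_ideal M /\ subP K M.
Proof.
move=> noethA Kideal K1; apply: contrapT => no_maximal.
pose step n := iter n (grow no_maximal) (exist _ K (And3 Kideal K1 (fun _ => id))).
pose chain n := sval (step n).
have chain_ideal n : is_ideal (chain n) by rewrite /chain; case: (step n) => X [].
have chain_sub n : subP (chain n) (chain n.+1) by have [] := growP no_maximal (step n).
have [N chainN] := noethA chain chain_ideal chain_sub.
by have [_] := growP no_maximal (step N); apply; exact: (chainN N.+1 (leqnSn N)).
Qed.

Lemma local_sub_maximal (A : comNzRingType) (P X : A -> Prop) :
  local_ring A -> noetherian A -> maximal_ideal P -> is_ideal X -> ~ X 1 -> subP X P.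
Proof.
move=> [m [_ m_unique]] noethA Pmax Xideal X1.
have [M [Mmax XM]] := noetherian_maximal_ideal noethA Xideal X1.
by move=> x /XM /(m_unique M Mmax) /(m_unique P Pmax).
Qed.

Section ColonRing.
Variables (R : comNzRingType) (Q : comUnitRingType) (iota : {rmorphism R -> Q}).
Variable I : ideal R.
Hypothesis iota_inj : injective iota.
Hypothesis iota_unit : forall s, nzd s -> iota s \is a GRing.unit.
Hypothesis iota_frac : forall z : Q, exists a s, nzd s /\ z = iota a / iota s.
Hypothesis trI : reg_trace I.

Local Notation S := (colon_ring iota I).

Lemma colonP_val (s : S) : colonP iota I (val s).
Proof. exact/asboolP/(valP s). Qed.

Lemma iota_colon a : iota a \in colonb iota I.
Proof.
have [_ _ IM] := ideal_is_ideal I.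
by apply/asboolP => i Ii; exists (a * i); split; [apply: IM | rewrite rmorphM].
Qed.

Lemma colon_of_mul_sub al : mul_sub iota al I (fun _ => True) -> al \in colonb iota I.
Proof. by have [_ _ Istab] := (reg_traceP iota_inj iota_unit I).1 trI; move/Istab/asboolP. Qed.

Lemma colon_nzd_unit (s : S) : nzd s -> val s \is a GRing.unit.
Proof.
move=> nzd_s; have [a [b [nzd_b Es]]] := iota_frac (val s).
suff nzd_a : nzd a by rewrite Es unitrM unitrV !iota_unit.
move=> y ay0; apply: iota_inj.
have : ColonRing (iota_colon y) = 0 :> S.
  apply: nzd_s; apply: val_inj.
  by rewrite rmorphM /= Es mulrAC -rmorphM ay0 !rmorph0 !mul0r.
by move/(congr1 val) => /= ->; rewrite rmorph0.
Qed.

Definition scaled (c : R) (P : S -> Prop) : R -> Prop :=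
  fun r => exists t, P t /\ iota r = iota c * val t.

Lemma scaled_ideal c P : is_ideal P -> is_ideal (scaled c P).
Proof.
move=> [P0 PD PM]; split.
- by exists 0; split=> //; rewrite !rmorph0 mulr0.
- move=> x y [t1 [Pt1 E1]] [t2 [Pt2 E2]]; exists (t1 + t2); split; first exact: PD.
  by rewrite !rmorphD E1 E2 mulrDr.
- move=> a x [t [Pt E]]; exists (ColonRing (iota_colon a) * t); split; first exact: PM.
  by rewrite !rmorphM E mulrCA.
Qed.

(* Multiplication by a regular [i0 \in I] embeds ideals of [S] into ideals of [R]. *)
Lemma colon_noetherian : noetherian R -> noetherian S.
Proof.
move=> noethR K Kideal Ksub; have [_ [i0 [Ii0 nzd_i0]]] := trI.
have Ksub' n : subP (scaled i0 (K n)) (scaled i0 (K n.+1)).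
  by move=> r [t [Kt E]]; exists t; split; first exact: Ksub.
have [N KN] := noethR _ (fun n => scaled_ideal i0 (Kideal n)) Ksub'.
exists N => n le_Nn t Kt; have [j [_ Ej]] := colonP_val t Ii0.
have [|t' [Kt' Et']] := KN n le_Nn j; first by exists t; split; rewrite // -Ej mulrC.
suff -> : t = t' by [].
by apply: val_inj; apply: (mulrI (iota_unit nzd_i0)); rewrite -Et' -Ej mulrC.
Qed.

Definition val_rmorph : {rmorphism S -> Q} := val.

Lemma reg_trace_colonP (X : S -> Prop) :
  reg_trace X <->
  [/\ is_ideal X, exists x, X x /\ val x \is a GRing.unit & colon_stable val_rmorph X].
Proof. exact: (reg_traceP val_inj colon_nzd_unit). Qed.

Lemma colon_image (X : S -> Prop) : is_ideal X -> X 1 ->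
  eqP_ (fun z => exists a, X a /\ z = val a) (colonP iota I).
Proof.
move=> [_ _ XM] X1 z; split; first by move=> [a [_ ->]]; exact: colonP_val.
move=> Iz; have zP : z \in colonb iota I by apply/asboolP.
by exists (ColonRing zP); split=> //; rewrite -[ColonRing _]mulr1; apply: XM.
Qed.

Section TraceIdealsOfColon.
Variables (J : ideal R) (q : R).
Hypothesis trJ : reg_trace J.
Hypothesis JI : subP J I.
Hypothesis Iq : I q.
Hypothesis Jq : ~ J q.
Hypothesis IJ_qJ : eqP_ (prod_ideal I J) (fun z => exists j, J j /\ z = q * j).

Lemma mul_IJ i j : I i -> J j -> exists j', J j' /\ i * j = q * j'.
Proof. by move=> Ii Jj; apply/IJ_qJ; exists 1%N, (fun=> i), (fun=> j); rewrite big_ord1. Qed.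

Lemma unit_q : iota q \is a GRing.unit.
Proof.
apply: iota_unit => y qy0; have [_ [i0 [Ii0 nzd_i0]]] := trI.
have [_ [j0 [Jj0 nzd_j0]]] := trJ; have [j' [_ Ei0j0]] := mul_IJ Ii0 Jj0.
by apply: nzd_j0; apply: nzd_i0; rewrite mulrA Ei0j0 mulrAC qy0 mul0r.
Qed.

Definition qinv (Y : R -> Prop) : S -> Prop :=
  fun s => exists y, Y y /\ iota q * val s = iota y.

Lemma qinvJ_colon j : J j -> (iota q)^-1 * iota j \in colonb iota I.
Proof.
move=> Jj; apply/asboolP => i Ii; have [j' [Jj' Eij]] := mul_IJ Ii Jj.
exists j'; split; first exact: JI.
by rewrite -mulrA -rmorphM [j * i]mulrC Eij rmorphM mulKr ?unit_q.
Qed.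

Lemma qinv_colon (Y : R -> Prop) j (Jj : J j) : Y j -> qinv Y (ColonRing (qinvJ_colon Jj)).
Proof. by move=> Yj; exists j; split; rewrite //= mulVKr ?unit_q. Qed.

Lemma colon_mul_stable (Y : R -> Prop) (s : S) :
  subP Y I -> colon_stable iota Y -> mul_sub iota (val s) Y Y.
Proof.
move=> YI Ystab; apply: Ystab => y /YI Iy.
by have [a [_ Ea]] := colonP_val s Iy; exists a.
Qed.

Lemma qinv_ideal (Y : R -> Prop) :
  is_ideal Y -> subP Y I -> colon_stable iota Y -> is_ideal (qinv Y).
Proof.
move=> [Y0 YD _] YI Ystab; split.
- by exists 0; split=> //; rewrite !rmorph0 mulr0.
- move=> x y [y1 [Yy1 E1]] [y2 [Yy2 E2]]; exists (y1 + y2); split; first exact: YD.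
  by rewrite !rmorphD mulrDr E1 E2.
- move=> s x [y [Yy E]]; have [y' [Yy' E']] := colon_mul_stable s YI Ystab Yy.
  by exists y'; split=> //; rewrite rmorphM mulrCA E.
Qed.

Lemma qinvJ_ideal : is_ideal (qinv J).
Proof.
have [Jideal _ Jstab] := (reg_traceP iota_inj iota_unit J).1 trJ.
exact: qinv_ideal.
Qed.

Lemma qinvJ_proper : ~ qinv J 1.
Proof. by move=> [j [Jj]]; rewrite rmorph1 mulr1 => /iota_inj Eqj; apply: Jq; rewrite Eqj. Qed.

Lemma scaled_q_sub_I : subP (scaled q (fun _ => True)) I.
Proof.
move=> r [t [_ E]]; have [j [Ij Ej]] := colonP_val t Iq.
by rewrite (iota_inj (_ : iota r = iota j)) // E mulrC.
Qed.

Hypothesis I2_qI : ~ eqP_ (prod_ideal I I) (fun z => exists i, I i /\ z = q * i).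

Lemma I_not_sub_scaled_q : ~ subP I (scaled q (fun _ => True)).
Proof.
move=> I_qS; apply: I2_qI => z; have [I0 ID IM] := ideal_is_ideal I; split.
- move=> [n [a [b [Ia Ib ->]]]]; elim/big_ind: _.
  + by exists 0; split; rewrite ?mulr0.
  + move=> _ _ [i1 [Ii1 ->]] [i2 [Ii2 ->]].
    by exists (i1 + i2); rewrite mulrDr; split=> //; apply: ID.
  + move=> k _; have [t [_ Et]] := I_qS _ (Ia k); have [j [Ij Ej]] := colonP_val t (Ib k).
    by exists j; split=> //; apply: iota_inj; rewrite !rmorphM Et -mulrA Ej.
- by move=> [i [Ii ->]]; exists 1%N, (fun=> q), (fun=> i); rewrite big_ord1.
Qed.

Hypothesis length_IJ : ~ ideal_chain J I 3.

Lemma qinvJ_maximal : maximal_ideal (qinv J).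
Proof.
split; [exact: qinvJ_ideal | exact: qinvJ_proper |].
move=> X Xideal JX; case: (pselect (subP X (qinv J))) => [|XJ]; [by left | right].
apply: contrapT => X1.
pose K n := match n with
  0 => (J : R -> Prop) | 1 => scaled q X | 2 => scaled q (fun _ => True) | _ => I end.
apply: length_IJ; exists K; split=> //.
- case=> [|[|[|n]]] _ /=; [exact: ideal_is_ideal | exact: scaled_ideal | | exact: ideal_is_ideal].
  by apply: scaled_ideal; split.
- case=> [|[|[|n]]] // _; apply: ssubP_of.
  + move=> j Jj; exists (ColonRing (qinvJ_colon Jj)); split; first exact/JX/qinv_colon.
    by rewrite /= mulrA mulrV ?unit_q ?mul1r.
  + move=> nJX; apply: XJ => k Xk; have [j [Ij Ej]] := colonP_val k Iq.
    exists j; split; last by rewrite mulrC.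
    by apply: nJX; exists k; split; rewrite // -Ej mulrC.
  + by move=> r [t [Xt E]]; exists t.
  + move=> qS_qX; have [//|t [Xt E]] := qS_qX q; first by exists 1; rewrite rmorph1 mulr1.
    suff t1 : t = 1 by apply: X1; rewrite -t1.
    by apply: val_inj; apply: (mulrI unit_q); rewrite -E rmorph1 mulr1.
  + exact: scaled_q_sub_I.
  + exact: I_not_sub_scaled_q.
Qed.

Lemma scaled_sub_J (X : S -> Prop) : subP X (qinv J) -> subP (scaled q X) J.
Proof.
move=> XJ r [t [Xt E]]; have [j [Jj Ej]] := XJ _ Xt.
by rewrite (iota_inj (_ : iota r = iota j)) // E Ej.
Qed.

Lemma qinv_image (Y : R -> Prop) : subP Y J ->
  eqP_ (fun z => exists a, qinv Y a /\ z = val a)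
       (fun z => exists y, Y y /\ z = (iota q)^-1 * iota y).
Proof.
move=> YJ z; split.
- by move=> [a [[y [Yy Ea]] ->]]; exists y; split; rewrite // -Ea mulKr ?unit_q.
- move=> [y [Yy ->]]; exists (ColonRing (qinvJ_colon (YJ _ Yy))).
  by split; first exact: qinv_colon.
Qed.

Lemma scaled_image (X : S -> Prop) : subP X (qinv J) ->
  eqP_ (fun z => exists a, X a /\ z = val a)
       (fun z => exists y, scaled q X y /\ z = (iota q)^-1 * iota y).
Proof.
move=> XJ z; split.
- move=> [a [Xa ->]]; have [j [_ Ej]] := XJ _ Xa.
  by exists j; split; [exists a; split | rewrite -Ej mulKr ?unit_q].
- by move=> [y [[a [Xa Ey]] ->]]; exists a; split; rewrite // Ey mulKr ?unit_q.
Qed.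

(* If [al (q^-1 Y) \subseteq S] then [al Y \subseteq q S \subseteq R], hence [al Y \subseteq Y]. *)
Lemma reg_trace_qinv (Y : R -> Prop) : reg_trace Y -> subP Y J -> reg_trace (qinv Y).
Proof.
move=> /(reg_traceP iota_inj iota_unit) [Yideal [y0 [Yy0 y0_unit]] Ystab] YJ.
apply/reg_trace_colonP; split.
- by apply: qinv_ideal => // y /YJ /JI.
- exists (ColonRing (qinvJ_colon (YJ _ Yy0))); split; first exact: qinv_colon.
  by rewrite /= unitrM unitrV unit_q.
- move=> al alX x [y [Yy Ey]].
  have alY : mul_sub iota al Y (fun _ => True).
    move=> y1 Yy1; have [a [_ Ea]] := alX _ (qinv_colon (YJ _ Yy1) Yy1).
    have [r [_ Er]] := colonP_val a Iq; exists r; split=> //.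
    by rewrite -Er -Ea /= [RHS]mulrC [RHS]mulrCA mulVKr ?unit_q.
  have [y' [Yy' Ey']] := Ystab al alY y Yy.
  exists (ColonRing (qinvJ_colon (YJ _ Yy'))); split; first exact: qinv_colon.
  by rewrite /= -Ey' -Ey mulrCA mulKr ?unit_q.
Qed.

(* [q^-1 i X \subseteq q^-2 (i J) = q^-1 J \subseteq S] because [I J = q J]. *)
Lemma colon_mul_qinvI (X : S -> Prop) i :
  colon_stable val_rmorph X -> subP X (qinv J) -> I i ->
  mul_sub val_rmorph ((iota q)^-1 * iota i) X X.
Proof.
move=> Xstab XJ Ii; apply: Xstab => x /XJ [j [Jj Ej]].
have [j' [Jj' Eij]] := mul_IJ Ii Jj.
exists (ColonRing (qinvJ_colon Jj')); split=> //=.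
have -> : val x = (iota q)^-1 * iota j by rewrite -Ej mulKr ?unit_q.
by rewrite mulrACA -rmorphM Eij rmorphM -mulrA mulKr ?unit_q.
Qed.

(* If [al (q X) \subseteq R] then [al X I = al q (q^-1 I X) \subseteq al q X \subseteq R],
   so [al X \subseteq S] and hence [al X \subseteq X]. *)
Lemma reg_trace_scaled (X : S -> Prop) :
  reg_trace X -> subP X (qinv J) -> reg_trace (scaled q X).
Proof.
move=> /reg_trace_colonP [Xideal [x0 [Xx0 x0_unit]] Xstab] XJ.
apply/(reg_traceP iota_inj iota_unit); split; first exact: scaled_ideal.
- have [j0 [_ Ej0]] := XJ _ Xx0.
  by exists j0; split; [exists x0 | rewrite -Ej0 unitrM unit_q].
- move=> al alY y [x [Xx Ey]].
  have alX : mul_sub val_rmorph al X (fun _ => True).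
    move=> x1 Xx1; suff alx1 : al * val x1 \in colonb iota I by exists (ColonRing alx1).
    apply: colon_of_mul_sub => i Ii.
    have [x2 [Xx2 E2]] := colon_mul_qinvI Xstab XJ Ii Xx1.
    have [j2 [_ Ej2]] := XJ _ Xx2.
    have [r [_ Er]] := alY j2 (ex_intro _ x2 (conj Xx2 (esym Ej2))).
    exists r; split=> //; rewrite -Er -Ej2 -E2 /=.
    by rewrite -!mulrA mulVKr ?unit_q // [_ * iota i]mulrC.
  have [x' [Xx' Ex']] := Xstab al alX x Xx.
  have [j' [_ Ej']] := XJ _ Xx'.
  exists j'; split; first by exists x'; split.
  by rewrite Ey mulrCA Ex' Ej'.
Qed.

Hypothesis noethR : noetherian R.
Hypothesis locS : local_ring S.

Lemma reg_trace_colonE (X : Q -> Prop) :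
  (exists X' : S -> Prop, reg_trace X' /\ eqP_ X (fun z => exists a, X' a /\ z = val a))
  <->
  ((exists Y : R -> Prop, [/\ reg_trace Y, subP Y J &
      eqP_ X (fun z => exists y, Y y /\ z = (iota q)^-1 * iota y)])
   \/ eqP_ X (colonP iota I)).
Proof.
split.
- move=> [X' [trX' XX']]; have [X'ideal _ _] := (reg_trace_colonP X').1 trX'.
  case: (pselect (X' 1)) => [X'1 | X'1]; [right | left].
    by move=> z; apply: iff_trans (XX' z) _; apply: colon_image.
  have X'J : subP X' (qinv J).
    exact: local_sub_maximal locS (colon_noetherian noethR) qinvJ_maximal X'ideal X'1.
  exists (scaled q X'); split; [exact: reg_trace_scaled | exact: scaled_sub_J |].
  by move=> z; apply: iff_trans (XX' z) _; apply: scaled_image.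
- case=> [[Y [trY YJ XY]] | XS].
  + exists (qinv Y); split; first exact: reg_trace_qinv.
    by move=> z; apply: iff_trans (XY z) (iff_sym _); apply: qinv_image.
  + exists (fun _ => True); split; first exact: reg_trace_setT.
    by move=> z; apply: iff_trans (XS z) (iff_sym _); apply: colon_image.
Qed.

End TraceIdealsOfColon.

End ColonRing.

Theorem corollary2p8 (R : comNzRingType) (Q : comUnitRingType)
  (iota : {rmorphism R -> Q}) (m : R -> Prop) (I J : ideal R) (q : R) :
  total_ring_of_fractions iota ->
  local_with m -> noetherian R -> krull_dim R 1 -> cohen_macaulay m ->
  reg_trace I -> reg_trace J -> subP J I -> quot_length J I 2 ->
  local_ring (colon_ring iota I) ->
  I q -> ~ J q ->
  eqP_ (prod_ideal I J) (fun z => exists j, J j /\ z = q * j) ->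
  ~ eqP_ (prod_ideal I I) (fun z => exists i, I i /\ z = q * i) ->
  forall X : Q -> Prop,
    (exists X' : colon_ring iota I -> Prop,
        reg_trace X' /\ eqP_ X (fun z => exists a, X' a /\ z = colon_val a))
    <->
    ((exists Y : R -> Prop, [/\ reg_trace Y, subP Y J &
        eqP_ X (fun z => exists y, Y y /\ z = (iota q)^-1 * iota y)])
     \/ eqP_ X (colonP iota I)).
Proof.
move=> [iota_inj iota_unit iota_frac] _ noethR _ _ trI trJ JI [_ length_IJ] locS
  Iq Jq IJ_qJ I2_qI.
exact: (reg_trace_colonE iota_inj iota_unit iota_frac trI trJ JI Iq Jq IJ_qJ I2_qI
  length_IJ noethR locS).
Qed.
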